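(* Let $X\subset\mathbb{R}^n$ be a closed unbounded subset which is Lipschitz regular at infinity. Then there exists a compact set $K\subset\mathbb{R}^n$ such that each connected component of $X\setminus K$ is Lipschitz normally embedded.
   Context: All subsets carry the Euclidean induced metric. A map is bi-Lipschitz if it is Lipschitz (i.e. $\|f(x_1)-f(x_2)\|\le\lambda\|x_1-x_2\|$ for some $\lambda>0$) with Lipschitz inverse. $X\subset\mathbb{R}^n$ is Lipschitz regular at infinity if there exist compact sets $K_1\subset\mathbb{R}^k$, $K_2\subset\mathbb{R}^n$ (some $k\in\mathbb{N}$) and a bi-Lipschitz homeomorphism $\mathbb{R}^k\setminus K_1\to X\setminus K_2$. For a path connected $Z\subset\mathbb{R}^n$, the inner distance $d_Z(x_1,x_2)$ is the infimum of the lengths of paths in $Z$ joining $x_1$ to $x_2$. A set $Z\subset\mathbb{R}^n$ is Lipschitz normally embedded if there is $\lambda>0$ with $d_Z(x_1,x_2)\le\lambda\|x_1-x_2\|$ for all $x_1,x_2\in Z$. *)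

From Stdlib Require Vectors.Fin.
From Stdlib Require Import Reals Lra.
Open Scope R_scope.

Definition point (n : nat) : Type := Fin.t n -> R.

Fixpoint sumFin (n : nat) : (Fin.t n -> R) -> R :=
  match n return (Fin.t n -> R) -> R with
  | O => fun _ => 0
  | S m => fun f => f Fin.F1 + sumFin m (fun i => f (Fin.FS i))
  end.

Definition dist {n : nat} (x y : point n) : R :=
  sqrt (sumFin n (fun i => (x i - y i) ^ 2)).

Definition RnSet (n : nat) := point n -> Prop.

Definition is_open {n : nat} (U : RnSet n) : Prop :=
  forall x, U x -> exists eps, 0 < eps /\ forall y, dist x y < eps -> U y.

Definition is_closed {n : nat} (F : RnSet n) : Prop :=
  is_open (fun x => ~ F x).

Definition is_bounded {n : nat} (A : RnSet n) : Prop :=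
  exists M, forall x y, A x -> A y -> dist x y <= M.

(* Compact subsets of R^n (Heine-Borel): closed and bounded. *)
Definition is_compact {n : nat} (K : RnSet n) : Prop :=
  is_closed K /\ is_bounded K.

Definition setminus {n : nat} (A B : RnSet n) : RnSet n := fun x => A x /\ ~ B x.

Definition lipschitz_on {k n : nat} (lam : R) (A : RnSet k) (f : point k -> point n) : Prop :=
  forall x1 x2, A x1 -> A x2 -> dist (f x1) (f x2) <= lam * dist x1 x2.

Definition bilipschitz_homeo {k n : nat} (A : RnSet k) (B : RnSet n)
    (f : point k -> point n) : Prop :=
  exists (g : point n -> point k) (lam : R), 0 < lam /\
    (forall x, A x -> B (f x)) /\ (forall y, B y -> A (g y)) /\
    (forall x, A x -> g (f x) = x) /\ (forall y, B y -> f (g y) = y) /\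
    lipschitz_on lam A f /\ lipschitz_on lam B g.

Definition lipschitz_regular_at_infinity {n : nat} (X : RnSet n) : Prop :=
  exists (k : nat) (K1 : RnSet k) (K2 : RnSet n) (f : point k -> point n),
    is_compact K1 /\ is_compact K2 /\
    bilipschitz_homeo (fun x => ~ K1 x) (setminus X K2) f.

Definition is_connected {n : nat} (S : RnSet n) : Prop :=
  ~ exists U V : RnSet n, is_open U /\ is_open V /\
      (forall x, S x -> U x \/ V x) /\
      (exists x, S x /\ U x) /\ (exists x, S x /\ V x) /\
      (forall x, S x -> U x -> V x -> False).

Definition connected_component {n : nat} (S C : RnSet n) : Prop :=
  (exists x, C x) /\ (forall x, C x -> S x) /\ is_connected C /\
  (forall D : RnSet n, is_connected D -> (forall x, C x -> D x) ->
     (forall x, D x -> S x) -> forall x, D x -> C x).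

Fixpoint poly_sum (m : nat) (f : nat -> R) : R :=
  match m with O => 0 | S m' => poly_sum m' f + f m' end.

Definition path_in {n : nat} (Z : RnSet n) (x1 x2 : point n) (g : R -> point n) : Prop :=
  g 0 = x1 /\ g 1 = x2 /\
  (forall t, 0 <= t <= 1 -> Z (g t)) /\
  (forall t, 0 <= t <= 1 -> forall eps, 0 < eps -> exists delta, 0 < delta /\
     forall s, 0 <= s <= 1 -> Rabs (s - t) < delta -> dist (g s) (g t) < eps).

Definition length_le {n : nat} (g : R -> point n) (L : R) : Prop :=
  forall (m : nat) (t : nat -> R),
    (forall i, (i <= m)%nat -> 0 <= t i <= 1) ->
    (forall i, (i < m)%nat -> t i <= t (S i)) ->
    poly_sum m (fun i => dist (g (t i)) (g (t (S i)))) <= L.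

(* Lipschitz normally embedded: d_Z(x1,x2) <= lam * |x1 - x2|, with the
   infimum defining the inner distance d_Z unfolded. *)
Definition LNE {n : nat} (Z : RnSet n) : Prop :=
  exists lam, 0 < lam /\
    forall x1 x2, Z x1 -> Z x2 -> forall eps, 0 < eps ->
      exists g, path_in Z x1 x2 g /\ length_le g (lam * dist x1 x2 + eps).

(* Let f : R^k \ K1 -> X \ K2 be bi-Lipschitz with inverse g, and let K1 lie in the
   open ball of radius R0. Removing from X the compact set K of its points that lie in K2 or
   have |g x| <= R0 leaves the image under f of the exterior of the ball. If k >= 2, any
   two points y1, y2 of that exterior are joined inside it by a path of length at most
   32 |y1 - y2|: push both radially outwards, then cross along a chord (through a
   perpendicular vector when the angle between them is obtuse). Mapping by f gives paths
   of length at most 32 lam^2 |x1 - x2|. If k = 1 the exterior consists of two half-lines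
   at distance 2 R0, whose images are at distance at least R0 / lam and hence separate
   every component, so each component is the image of part of one half-line, where the
   segment itself is such a path. *)

From Stdlib Require Import Reals Lra Psatz Classical FunctionalExtensionality.
Open Scope R_scope.

Lemma sumFin_ext m (f g : Fin.t m -> R) :
  (forall i, f i = g i) -> sumFin m f = sumFin m g.
Proof.
  revert f g; induction m as [|m IH]; intros f g E; simpl; [reflexivity|].
  rewrite E, (IH (fun i => f (Fin.FS i)) (fun i => g (Fin.FS i))); auto.
Qed.

Lemma sumFin_add m (f g : Fin.t m -> R) :
  sumFin m (fun i => f i + g i) = sumFin m f + sumFin m g.
Proof.
  revert f g; induction m as [|m IH]; intros f g; simpl; [lra|].
  rewrite (IH (fun i => f (Fin.FS i)) (fun i => g (Fin.FS i))); lra.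
Qed.

Lemma sumFin_scal m c (f : Fin.t m -> R) :
  sumFin m (fun i => c * f i) = c * sumFin m f.
Proof.
  revert f; induction m as [|m IH]; intros f; simpl; [lra|].
  rewrite (IH (fun i => f (Fin.FS i))); lra.
Qed.

Lemma sumFin_nonneg m (f : Fin.t m -> R) :
  (forall i, 0 <= f i) -> 0 <= sumFin m f.
Proof.
  revert f; induction m as [|m IH]; intros f H; simpl; [lra|].
  pose proof (H Fin.F1); pose proof (IH (fun i => f (Fin.FS i)) (fun i => H _)); lra.
Qed.

Lemma sumFin_zero k (f : Fin.t k -> R) : sumFin k (fun i => 0 * f i) = 0.
Proof. rewrite sumFin_scal; ring. Qed.

Section Euclid.
Context {n : nat}.
Implicit Types x y z : point n.

Definition vadd x y : point n := fun i => x i + y i.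
Definition vsub x y : point n := fun i => x i - y i.
Definition vscal (c : R) x : point n := fun i => c * x i.
Definition vzero : point n := fun _ => 0.
Definition dot x y : R := sumFin n (fun i => x i * y i).
Definition norm x : R := dist x vzero.

Lemma dot_sym x y : dot x y = dot y x.
Proof. apply sumFin_ext; intros; ring. Qed.

Lemma dot_add_l x y z : dot (vadd x y) z = dot x z + dot y z.
Proof. unfold dot, vadd; rewrite <- sumFin_add; apply sumFin_ext; intros; ring. Qed.

Lemma dot_scal_l c x z : dot (vscal c x) z = c * dot x z.
Proof. unfold dot, vscal; rewrite <- sumFin_scal; apply sumFin_ext; intros; ring. Qed.

Lemma dot_sub_l x y z : dot (vsub x y) z = dot x z - dot y z.
Proof.
  replace (vsub x y) with (vadd x (vscal (-1) y))
    by (apply functional_extensionality; intro; unfold vsub, vadd, vscal; ring).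
  rewrite dot_add_l, dot_scal_l; ring.
Qed.

Lemma dot_add_r x y z : dot z (vadd x y) = dot z x + dot z y.
Proof. rewrite !(dot_sym z); apply dot_add_l. Qed.

Lemma dot_sub_r x y z : dot z (vsub x y) = dot z x - dot z y.
Proof. rewrite !(dot_sym z); apply dot_sub_l. Qed.

Lemma dot_scal_r c x z : dot z (vscal c x) = c * dot z x.
Proof. rewrite !(dot_sym z); apply dot_scal_l. Qed.

Lemma dot_zero_l z : dot vzero z = 0.
Proof.
  replace vzero with (vscal 0 z)
    by (apply functional_extensionality; intro; unfold vscal, vzero; ring).
  rewrite dot_scal_l; ring.
Qed.

Lemma dot_self_nonneg x : 0 <= dot x x.
Proof. apply sumFin_nonneg; intros; nra. Qed.

Lemma dist_dot x y : dist x y = sqrt (dot (vsub x y) (vsub x y)).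
Proof. unfold dist, dot, vsub; f_equal; apply sumFin_ext; intros; ring. Qed.

Lemma dist_nonneg x y : 0 <= dist x y.
Proof. apply sqrt_pos. Qed.

Lemma dist_sq x y : dist x y ^ 2 = dot x x - 2 * dot x y + dot y y.
Proof.
  rewrite dist_dot, pow2_sqrt by apply dot_self_nonneg.
  rewrite dot_sub_l, !dot_sub_r, (dot_sym y x); ring.
Qed.

Lemma norm_dot x : norm x = sqrt (dot x x).
Proof.
  unfold norm; rewrite dist_dot; f_equal; apply sumFin_ext; intros; unfold vsub, vzero; ring.
Qed.

Lemma norm_sq x : norm x ^ 2 = dot x x.
Proof. rewrite norm_dot, pow2_sqrt; auto using dot_self_nonneg. Qed.

Lemma norm_nonneg x : 0 <= norm x.
Proof. apply dist_nonneg. Qed.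

Lemma norm_gt_sq (r : R) x : 0 <= r -> r ^ 2 < dot x x -> r < norm x.
Proof.
  intros Hr H; rewrite norm_dot, <- (sqrt_pow2 r Hr).
  apply sqrt_lt_1_alt; split; nra.
Qed.

(* The discriminant of [t |-> |x + t y|^2] is nonpositive. *)
Lemma Cauchy_Schwarz x y : dot x y ^ 2 <= dot x x * dot y y.
Proof.
  assert (Hq : forall t, 0 <= dot x x + 2 * t * dot x y + t ^ 2 * dot y y).
  { intro t; pose proof (dot_self_nonneg (vadd x (vscal t y))) as H.
    rewrite dot_add_l, !dot_add_r, !dot_scal_l, !dot_scal_r, (dot_sym y x) in H; nra. }
  pose proof (dot_self_nonneg y).
  destruct (Req_dec (dot y y) 0) as [E|E].
  - destruct (Req_dec (dot x y) 0) as [E2|E2]; [rewrite E2, E; nra|].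
    pose proof (Hq (- (dot x x + 1) / (2 * dot x y))) as Ht.
    rewrite E in Ht.
    replace (dot x x + 2 * (- (dot x x + 1) / (2 * dot x y)) * dot x y
             + (- (dot x x + 1) / (2 * dot x y)) ^ 2 * 0) with (-1) in Ht by (field; auto).
    lra.
  - pose proof (Hq (- dot x y / dot y y)) as Ht.
    replace (dot x x + 2 * (- dot x y / dot y y) * dot x y + (- dot x y / dot y y) ^ 2 * dot y y)
      with ((dot x x * dot y y - dot x y ^ 2) / dot y y) in Ht by (field; lra).
    assert (0 < dot y y) by lra.
    apply Rmult_le_compat_r with (r := dot y y) in Ht; [|lra].
    unfold Rdiv in Ht; rewrite Rmult_assoc, Rinv_l in Ht; lra.
Qed.

Lemma dist_triangle x y z : dist x z <= dist x y + dist y z.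
Proof.
  assert (Hs : forall u, 0 <= sqrt (dot u u)) by (intros; apply sqrt_pos).
  assert (Hsq : forall u, sqrt (dot u u) ^ 2 = dot u u)
    by (intros; apply pow2_sqrt, dot_self_nonneg).
  rewrite !dist_dot; set (u := vsub x y); set (v := vsub y z).
  replace (vsub x z) with (vadd u v)
    by (apply functional_extensionality; intro; unfold u, v, vadd, vsub; ring).
  apply Rsqr_incr_0_var; [|pose proof (Hs u); pose proof (Hs v); lra].
  rewrite Rsqr_sqrt by apply dot_self_nonneg; unfold Rsqr.
  rewrite dot_add_l, !dot_add_r, (dot_sym v u).
  assert (Huv : dot u v <= sqrt (dot u u) * sqrt (dot v v)).
  { apply Rsqr_incr_0_var; [|apply Rmult_le_pos; apply sqrt_pos].
    unfold Rsqr; pose proof (Cauchy_Schwarz u v); pose proof (Hsq u); pose proof (Hsq v); nra. }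
  pose proof (Hsq u); pose proof (Hsq v); nra.
Qed.

Lemma dist_sym x y : dist x y = dist y x.
Proof. rewrite !dist_dot; f_equal; apply sumFin_ext; intros; unfold vsub; ring. Qed.

Lemma dist_self x : dist x x = 0.
Proof.
  rewrite dist_dot; unfold dot, vsub.
  rewrite (sumFin_ext _ _ (fun i => 0 * (x i * x i))) by (intros; ring).
  rewrite sumFin_scal, Rmult_0_l; apply sqrt_0.
Qed.

Lemma dist_eq_scale (u v a b : point n) (c : R) :
  (forall i, (u i - v i) ^ 2 = c ^ 2 * (a i - b i) ^ 2) -> dist u v = Rabs c * dist a b.
Proof.
  intro H; unfold dist.
  rewrite (sumFin_ext _ _ (fun i => c ^ 2 * (a i - b i) ^ 2)) by apply H.
  assert (Hc : sqrt (c ^ 2) = Rabs c) by (rewrite <- sqrt_Rsqr_abs; unfold Rsqr; f_equal; ring).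
  rewrite sumFin_scal, sqrt_mult, Hc;
    [reflexivity | apply pow2_ge_0 | apply sumFin_nonneg; intros; apply pow2_ge_0].
Qed.

Lemma dist_scal c y z : dist (vscal c y) (vscal c z) = Rabs c * dist y z.
Proof. apply dist_eq_scale; intros; unfold vscal; ring. Qed.

Lemma norm_scal c y : norm (vscal c y) = Rabs c * norm y.
Proof. apply dist_eq_scale; intros; unfold vscal, vzero; ring. Qed.

Lemma dist_scal_l c y : dist (vscal c y) y = Rabs (c - 1) * norm y.
Proof. apply dist_eq_scale; intros; unfold vscal, vzero; ring. Qed.

Lemma dist_le_norm x y : dist x y <= norm x + norm y.
Proof. unfold norm; rewrite (dist_sym y vzero); apply dist_triangle. Qed.

Lemma norm_le_dist x y : norm y <= norm x + dist x y.
Proof. unfold norm; rewrite (dist_sym x y), Rplus_comm; apply dist_triangle. Qed.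

End Euclid.

Section Paths.
Context {n : nat}.
Implicit Types (a b c : point n) (p q : R -> point n).

Definition continuous01 p : Prop :=
  forall t, 0 <= t <= 1 -> forall eps, 0 < eps -> exists delta, 0 < delta /\
    forall s, 0 <= s <= 1 -> Rabs (s - t) < delta -> dist (p s) (p t) < eps.

Definition lipschitz01 (L : R) p : Prop :=
  0 <= L /\ forall s t, 0 <= s <= 1 -> 0 <= t <= 1 -> dist (p s) (p t) <= L * Rabs (s - t).

Definition lpath (Z : RnSet n) (L : R) a b p : Prop :=
  p 0 = a /\ p 1 = b /\ lipschitz01 L p /\ forall t, 0 <= t <= 1 -> Z (p t).

Definition seg a b : R -> point n := fun t => vadd (vscal (1 - t) a) (vscal t b).

Definition conc p q : R -> point n :=
  fun t => if Rle_dec t (1/2) then p (2 * t) else q (2 * t - 1).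

Definition rev p : R -> point n := fun t => p (1 - t).

Lemma lipschitz01_length L p : lipschitz01 L p -> length_le p L.
Proof.
  intros [HL Hp] m t Ht Hmono.
  enough (poly_sum m (fun i => dist (p (t i)) (p (t (S i)))) <= L * (t m - t O)).
  { pose proof (Ht m ltac:(lia)); pose proof (Ht O ltac:(lia)); nra. }
  induction m as [|m IH]; simpl; [lra|].
  assert (IH' := IH ltac:(intros; apply Ht; lia) ltac:(intros; apply Hmono; lia)).
  pose proof (Hp (t m) (t (S m)) ltac:(apply Ht; lia) ltac:(apply Ht; lia)) as Hstep.
  pose proof (Hmono m ltac:(lia)).
  rewrite Rabs_left1 in Hstep by lra; nra.
Qed.

Lemma lipschitz01_continuous01 L p : lipschitz01 L p -> continuous01 p.
Proof.
  intros [HL Hp] t Ht eps He; exists (eps / (L + 1)); split; [apply Rdiv_lt_0_compat; lra|].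
  intros s Hs Hst; eapply Rle_lt_trans; [apply Hp; auto|].
  apply Rle_lt_trans with ((L + 1) * Rabs (s - t)); [pose proof (Rabs_pos (s - t)); nra|].
  apply Rmult_lt_reg_l with (/ (L + 1)); [apply Rinv_0_lt_compat; lra|].
  rewrite <- Rmult_assoc, Rinv_l, Rmult_1_l by lra; unfold Rdiv in Hst; lra.
Qed.

Lemma lpath_weaken Z L L' a b p : lpath Z L a b p -> L <= L' -> lpath Z L' a b p.
Proof.
  intros (E0 & E1 & [HL Hp] & HS) HLL'; repeat split; auto; [lra|].
  intros s t Hs Ht; specialize (Hp s t Hs Ht); pose proof (Rabs_pos (s - t)); nra.
Qed.

Lemma lpath_seg (Z : RnSet n) a b :
  (forall t, 0 <= t <= 1 -> Z (seg a b t)) -> lpath Z (dist a b) a b (seg a b).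
Proof.
  intro HS; repeat split; auto; try apply dist_nonneg.
  - apply functional_extensionality; intro; unfold seg, vadd, vscal; ring.
  - apply functional_extensionality; intro; unfold seg, vadd, vscal; ring.
  - intros s t _ _; rewrite (dist_eq_scale _ _ a b (t - s)), Rabs_minus_sym; [lra|].
    intro i; unfold seg, vadd, vscal; ring.
Qed.

Lemma lpath_conc Z L a b c p q :
  lpath Z L a b p -> lpath Z L b c q -> lpath Z (2 * L) a c (conc p q).
Proof.
  intros (Ep0 & Ep1 & [HL Hp] & Sp) (Eq0 & Eq1 & [_ Hq] & Sq).
  assert (Hmix : forall s t, 0 <= s <= 1/2 -> 1/2 < t <= 1 ->
            dist (p (2 * s)) (q (2 * t - 1)) <= 2 * L * Rabs (s - t)).
  { intros s t Hs Ht; eapply Rle_trans; [apply (dist_triangle _ b)|].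
    pose proof (Hp (2 * s) 1 ltac:(lra) ltac:(lra)) as H1.
    pose proof (Hq 0 (2 * t - 1) ltac:(lra) ltac:(lra)) as H2.
    rewrite Ep1 in H1; rewrite Eq0 in H2.
    rewrite Rabs_left1 in H1, H2 |- * by lra; nra. }
  unfold conc; repeat split.
  - destruct (Rle_dec 0 (1/2)); [|lra]; rewrite Rmult_0_r; exact Ep0.
  - destruct (Rle_dec 1 (1/2)); [lra|]; replace (2 * 1 - 1) with 1 by ring; exact Eq1.
  - lra.
  - intros s t Hs Ht.
    destruct (Rle_dec s (1/2)), (Rle_dec t (1/2)).
    + pose proof (Hp (2 * s) (2 * t) ltac:(lra) ltac:(lra)) as H.
      replace (2 * s - 2 * t) with (2 * (s - t)) in H by ring.
      rewrite Rabs_mult, Rabs_right in H by lra; lra.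
    + apply Hmix; lra.
    + rewrite dist_sym, Rabs_minus_sym; apply Hmix; lra.
    + pose proof (Hq (2 * s - 1) (2 * t - 1) ltac:(lra) ltac:(lra)) as H.
      replace (2 * s - 1 - (2 * t - 1)) with (2 * (s - t)) in H by ring.
      rewrite Rabs_mult, Rabs_right in H by lra; lra.
  - intros t Ht; destruct (Rle_dec t (1/2)); [apply Sp | apply Sq]; lra.
Qed.

Lemma lpath_rev Z L a b p : lpath Z L a b p -> lpath Z L b a (rev p).
Proof.
  intros (E0 & E1 & [HL Hp] & HS); unfold rev; repeat split; auto.
  - rewrite Rminus_0_r; exact E1.
  - rewrite Rminus_diag; exact E0.
  - intros s t Hs Ht; replace (s - t) with ((1 - t) - (1 - s)) by ring.
    rewrite Rabs_minus_sym; apply Hp; lra.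
  - intros t Ht; apply HS; lra.
Qed.

End Paths.

Section Connected.
Context {n : nat}.
Implicit Types (A B U V : RnSet n) (g : R -> point n).

(* [m] is the supremum of the [s] with [g [0, s]] inside [U]; it can lie neither in
   [U] (then the interval extends past [m] or reaches 1) nor in [V] (then points just
   below [m] would be in both). *)
Lemma continuous01_stays_open g U V : continuous01 g -> is_open U -> is_open V ->
  (forall t, 0 <= t <= 1 -> U (g t) \/ V (g t)) ->
  (forall t, 0 <= t <= 1 -> U (g t) -> V (g t) -> False) ->
  U (g 0) -> forall t, 0 <= t <= 1 -> U (g t).
Proof.
  intros Hc HU HV Hcov Hdis H0.
  set (E := fun s => 0 <= s <= 1 /\ forall u, 0 <= u <= s -> U (g u)).
  assert (HE0 : E 0) by (split; [lra | intros u Hu; replace u with 0 by lra; auto]).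
  destruct (completeness E) as [m [Hub Hlub]];
    [exists 1; intros s [Hs _]; lra | now exists 0 |].
  assert (Hm : 0 <= m <= 1) by (split; [apply Hub, HE0 | apply Hlub; intros s [Hs _]; lra]).
  assert (Hbelow : forall u, 0 <= u < m -> U (g u)).
  { intros u Hu; apply NNPP; intro HnU.
    enough (m <= u) by lra.
    apply Hlub; intros s [Hs HsU]; destruct (Rle_or_lt s u) as [|Hus]; auto.
    exfalso; apply HnU, HsU; lra. }
  assert (Hnear : forall W, is_open W -> W (g m) ->
            exists delta, 0 < delta /\ forall u, 0 <= u <= 1 -> Rabs (u - m) < delta -> W (g u)).
  { intros W HW Wm; destruct (HW _ Wm) as [eps [He Hball]].
    destruct (Hc m Hm eps He) as [delta [Hd Hcd]].
    exists delta; split; auto; intros u Hu Hum; apply Hball; rewrite dist_sym; auto. }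
  destruct (Hcov m Hm) as [Um|Vm].
  - destruct (Hnear U HU Um) as [delta [Hd HdU]].
    assert (Hupto : forall u, 0 <= u <= Rmin 1 (m + delta / 2) -> U (g u)).
    { intros u Hu; destruct (Rlt_or_le u m); [apply Hbelow; lra|].
      pose proof (Rmin_l 1 (m + delta / 2)); pose proof (Rmin_r 1 (m + delta / 2)).
      apply HdU; [lra | rewrite Rabs_right; lra]. }
    destruct (Rlt_or_le m 1) as [Hlt|Hge].
    + exfalso; assert (Hle : Rmin 1 (m + delta / 2) <= m)
        by (apply Hub; split; [split; [apply Rmin_glb; lra | apply Rmin_l] | exact Hupto]).
      pose proof (Rmin_glb_lt 1 (m + delta / 2) m Hlt ltac:(lra)); lra.
    + intros t Ht; apply Hupto; rewrite Rmin_left; lra.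
  - exfalso; destruct (Hnear V HV Vm) as [delta [Hd HdV]].
    destruct (Rle_or_lt m 0) as [Hm0|Hmpos].
    + apply (Hdis m Hm); [replace m with 0 by lra|]; auto.
    + set (u := Rmax 0 (m - delta / 2)).
      assert (Hu : 0 <= u < m) by (split; [apply Rmax_l | apply Rmax_lub_lt; lra]).
      apply (Hdis u ltac:(lra)); [apply Hbelow; auto|].
      apply HdV; [lra|]; rewrite Rabs_left by lra.
      pose proof (Rmax_r 0 (m - delta / 2)); fold u in H; lra.
Qed.

Definition image01 g : RnSet n := fun x => exists t, 0 <= t <= 1 /\ x = g t.

Lemma image01_connected g : continuous01 g -> is_connected (image01 g).
Proof.
  intros Hc [U [V (HU & HV & Hcov & [x [[tx [Htx ->]] Ux]] & [y [[ty [Hty ->]] Vy]] & Hdis)]].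
  assert (Hcov' : forall t, 0 <= t <= 1 -> U (g t) \/ V (g t))
    by (intros; apply Hcov; now exists t).
  assert (Hdis' : forall t, 0 <= t <= 1 -> U (g t) -> V (g t) -> False)
    by (intros t Ht; apply Hdis; now exists t).
  destruct (Hcov' 0 ltac:(lra)) as [H0|H0].
  - exact (Hdis' ty Hty (continuous01_stays_open g U V Hc HU HV Hcov' Hdis' H0 ty Hty) Vy).
  - refine (Hdis' tx Htx Ux (continuous01_stays_open g V U Hc HV HU _ _ H0 tx Htx)).
    + intros t Ht; destruct (Hcov' t Ht); auto.
    + intros t Ht Vt Ut; exact (Hdis' t Ht Ut Vt).
Qed.

Lemma connected_one_side A U V : is_connected A -> is_open U -> is_open V ->
  (forall x, A x -> U x \/ V x) -> (forall x, A x -> U x -> V x -> False) ->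
  (forall x, A x -> U x) \/ (forall x, A x -> V x).
Proof.
  intros HA HU HV Hcov Hdis.
  destruct (classic (exists x, A x /\ V x)) as [Hv|Hv].
  - destruct (classic (exists x, A x /\ U x)) as [Hu|Hu];
      [exfalso; apply HA; exists U, V; auto 10|].
    right; intros x Ax; destruct (Hcov x Ax); auto; exfalso; eauto.
  - left; intros x Ax; destruct (Hcov x Ax); auto; exfalso; eauto.
Qed.

Lemma union_connected A B p : is_connected A -> is_connected B -> A p -> B p ->
  is_connected (fun x => A x \/ B x).
Proof.
  intros HA HB Ap Bp [U [V (HU & HV & Hcov & [x [ABx Ux]] & [y [ABy Vy]] & Hdis)]].
  destruct (connected_one_side A U V HA HU HV) as [AU|AV];
    [intros; apply Hcov; auto | intros z Az; apply Hdis; auto | |];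
  destruct (connected_one_side B U V HB HU HV) as [BU|BV];
    try (intros; apply Hcov; auto); try (intros z Bz; apply Hdis; auto).
  - destruct ABy as [Ay|By]; apply (Hdis y); auto.
  - apply (Hdis p); auto.
  - apply (Hdis p); auto.
  - destruct ABx as [Ax|Bx]; apply (Hdis x); auto.
Qed.

Lemma component_contains_path Z C g : connected_component Z C -> continuous01 g ->
  C (g 0) -> (forall t, 0 <= t <= 1 -> Z (g t)) -> forall t, 0 <= t <= 1 -> C (g t).
Proof.
  intros (_ & HCS & HCc & Hmax) Hc H0 HS t Ht.
  apply (Hmax (fun x => C x \/ image01 g x)).
  - apply union_connected with (g 0); auto;
      [apply image01_connected; auto | exists 0; split; auto; lra].
  - auto.
  - intros x [Cx|[s [Hs ->]]]; auto.
  - right; exists t; auto.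
Qed.



Lemma component_lpath Z C (L : R) (a b : point n) (p : R -> point n) :
  connected_component Z C -> C a -> lpath Z L a b p -> path_in C a b p /\ length_le p L.
Proof.
  intros HC Ca (E0 & E1 & Lp & Sp).
  pose proof (lipschitz01_continuous01 L p Lp) as Hc.
  repeat split; auto; [|now apply lipschitz01_length].
  apply (component_contains_path Z); auto; now rewrite E0.
Qed.

End Connected.

Section Exterior.
Context {n : nat}.
Implicit Types (a b w y : point n).

Definition outside_ball (R0 : R) : RnSet n := fun z => R0 < norm z.

Lemma seg_scal (c : R) a b t : seg (vscal c a) (vscal c b) t = vscal c (seg a b t).
Proof. apply functional_extensionality; intro; unfold seg, vadd, vscal; ring. Qed.

Lemma dot_seg a b t :
  dot (seg a b t) (seg a b t) = (1 - t) ^ 2 * dot a a + 2 * t * (1 - t) * dot a b + t ^ 2 * dot b b.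
Proof.
  unfold seg; rewrite dot_add_l, !dot_add_r, !dot_scal_l, !dot_scal_r, (dot_sym b a); ring.
Qed.

(* |seg a b t|^2 = (1-t)|a|^2 + t|b|^2 - t(1-t)|a-b|^2 *)
Lemma dot_seg_ge a b t : norm a <= norm b -> 0 <= t <= 1 ->
  norm a ^ 2 - dist a b ^ 2 / 4 <= dot (seg a b t) (seg a b t).
Proof.
  intros Hab Ht; rewrite dot_seg, dist_sq, <- !norm_sq.
  set (A := norm a ^ 2); set (B := norm b ^ 2); set (D := dot a b).
  assert (HAB : A <= B) by (unfold A, B; pose proof (norm_nonneg a); nra).
  assert (HX : 0 <= A - 2 * D + B)
    by (unfold A, B, D; rewrite !norm_sq, <- dist_sq; apply pow2_ge_0).
  assert (Ht4 : t * (1 - t) * (A - 2 * D + B) <= 1 / 4 * (A - 2 * D + B))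
    by (apply Rmult_le_compat_r; [lra | pose proof (pow2_ge_0 (2 * t - 1)); nra]).
  replace ((1 - t) ^ 2 * A + 2 * t * (1 - t) * D + t ^ 2 * B)
    with (A + t * (B - A) - t * (1 - t) * (A - 2 * D + B)) by ring.
  assert (0 <= t * (B - A)) by (apply Rmult_le_pos; lra).
  lra.
Qed.

Lemma seg_outside_acute R0 a b t : 0 <= R0 -> 2 * R0 ^ 2 < dot a a -> 2 * R0 ^ 2 < dot b b ->
  0 <= dot a b -> 0 <= t <= 1 -> outside_ball R0 (seg a b t).
Proof.
  intros HR Ha Hb Hab Ht; apply norm_gt_sq; [lra|]; rewrite dot_seg.
  set (m := Rmin (dot a a) (dot b b)).
  assert (Hm : 2 * R0 ^ 2 < m) by (apply Rmin_glb_lt; lra).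
  assert (0 <= 2 * t * (1 - t) * dot a b) by (apply Rmult_le_pos; nra).
  assert ((1 - t) ^ 2 * m <= (1 - t) ^ 2 * dot a a)
    by (apply Rmult_le_compat_l; [nra | apply Rmin_l]).
  assert (t ^ 2 * m <= t ^ 2 * dot b b) by (apply Rmult_le_compat_l; [nra | apply Rmin_r]).
  assert (m / 2 <= ((1 - t) ^ 2 + t ^ 2) * m) by (pose proof (pow2_ge_0 (2 * t - 1)); nra).
  nra.
Qed.

Lemma radial_seg_outside R0 (lam : R) y t : 1 <= lam -> outside_ball R0 y -> 0 <= t <= 1 ->
  outside_ball R0 (seg y (vscal lam y) t).
Proof.
  intros Hl Hy Ht; unfold outside_ball in *.
  replace (seg y (vscal lam y) t) with (vscal (1 - t + t * lam) y)
    by (apply functional_extensionality; intro; unfold seg, vadd, vscal; ring).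
  rewrite norm_scal, Rabs_right by nra.
  assert (0 <= (t * (lam - 1)) * norm y) by (apply Rmult_le_pos; [nra | apply norm_nonneg]).
  nra.
Qed.

Lemma lpath_radial R0 (lam : R) y : 1 <= lam -> outside_ball R0 y ->
  lpath (outside_ball R0) ((lam - 1) * norm y) y (vscal lam y) (seg y (vscal lam y)).
Proof.
  intros Hl Hy; replace ((lam - 1) * norm y) with (dist y (vscal lam y)).
  - apply lpath_seg; intros; apply radial_seg_outside; auto.
  - rewrite dist_sym, dist_scal_l, Rabs_right by lra; reflexivity.
Qed.

Lemma lpath_scaled R0 (lam M : R) y1 y2 : 1 <= lam ->
  outside_ball R0 y1 -> outside_ball R0 y2 ->
  (forall t, 0 <= t <= 1 -> outside_ball R0 (seg (vscal lam y1) (vscal lam y2) t)) ->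
  (lam - 1) * norm y1 <= M -> lam * dist y1 y2 <= M -> (lam - 1) * norm y2 <= M ->
  exists p, lpath (outside_ball R0) (4 * M) y1 y2 p.
Proof.
  intros Hl Hy1 Hy2 Hmid H1 H2 H3.
  assert (0 <= M) by (pose proof (dist_nonneg y1 y2); nra).
  exists (conc (seg y1 (vscal lam y1))
            (conc (seg (vscal lam y1) (vscal lam y2)) (rev (seg y2 (vscal lam y2))))).
  replace (4 * M) with (2 * (2 * M)) by ring.
  apply lpath_conc with (vscal lam y1); [|apply lpath_conc with (vscal lam y2)].
  - apply lpath_weaken with ((lam - 1) * norm y1); [apply lpath_radial|]; auto; lra.
  - apply lpath_weaken with (dist (vscal lam y1) (vscal lam y2)); [apply lpath_seg; auto|].
    rewrite dist_scal, Rabs_right; lra.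
  - apply lpath_weaken with ((lam - 1) * norm y2); [apply lpath_rev, lpath_radial|]; auto; lra.
Qed.

Lemma outside_ball_dot R0 y : 0 <= R0 -> outside_ball R0 y -> R0 ^ 2 < dot y y.
Proof. unfold outside_ball; intros; rewrite <- norm_sq; nra. Qed.

Definition has_perp : Prop :=
  forall a : point n, exists w, dot w a = 0 /\ 2 * dot a a <= dot w w <= 4 * dot a a.

Section Ordered.
Variables (R0 : R) (y1 y2 : point n).
Hypotheses (HR0 : 0 < R0) (Hy1 : R0 < norm y1) (Hy12 : norm y1 <= norm y2).

Lemma near_chord_outside (lam : R) : dist y1 y2 <= norm y1 ->
  lam * norm y1 = norm y1 + dist y1 y2 ->
  forall t, 0 <= t <= 1 -> outside_ball R0 (seg (vscal lam y1) (vscal lam y2) t).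
Proof.
  intros Hd Hlam t Ht.
  pose proof (dist_nonneg y1 y2); pose proof (norm_nonneg (seg y1 y2 t)).
  pose proof (dot_seg_ge y1 y2 t Hy12 Ht) as Hs; rewrite <- norm_sq in Hs.
  set (r1 := norm y1) in *; set (d := dist y1 y2) in *; set (N := norm (seg y1 y2 t)) in *.
  assert (Hlam0 : 0 <= lam) by nra.
  unfold outside_ball; rewrite seg_scal, norm_scal, Rabs_right by lra; fold N.
  (* (1 + s)^2 (1 - s^2/4) >= 1 for s = d / r1 in [0, 1] *)
  assert (Hkey : r1 ^ 2 * r1 ^ 2 <= (lam * r1) ^ 2 * (r1 ^ 2 - d ^ 2 / 4)).
  { rewrite Hlam.
    assert (0 <= d * r1 * (r1 - d)) by (apply Rmult_le_pos; nra).
    assert (0 <= d ^ 2 * (r1 ^ 2 - d ^ 2)) by (apply Rmult_le_pos; nra).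
    nra. }
  assert (Hmul : (lam * r1) ^ 2 * (r1 ^ 2 - d ^ 2 / 4) <= (lam * r1) ^ 2 * N ^ 2)
    by (apply Rmult_le_compat_l; [apply pow2_ge_0 | lra]).
  assert (Hsq : r1 ^ 2 <= (lam * N) ^ 2).
  { apply Rmult_le_reg_l with (r1 ^ 2); [nra|].
    replace (r1 ^ 2 * (lam * N) ^ 2) with ((lam * r1) ^ 2 * N ^ 2) by ring; lra. }
  assert (r1 <= lam * N); [|lra].
  apply Rsqr_incr_0_var; [unfold Rsqr; nra | apply Rmult_le_pos; lra].
Qed.

Lemma exterior_lpath_near : dist y1 y2 <= norm y1 ->
  exists p, lpath (outside_ball R0) (32 * dist y1 y2) y1 y2 p.
Proof.
  intro Hd.
  assert (Hr2 : norm y2 <= norm y1 + dist y1 y2) by apply norm_le_dist.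
  pose proof (dist_nonneg y1 y2).
  set (r1 := norm y1) in *; set (r2 := norm y2) in *; set (d := dist y1 y2) in *.
  (* Pushing out by [d] keeps the radial legs of length O(d). *)
  set (lam := 1 + d / r1).
  assert (Hlam : lam * r1 = r1 + d) by (unfold lam; field; lra).
  assert (Hdr : d / r1 * r1 = d) by (field; lra).
  assert (Hq : 0 <= d / r1 <= 1) by (split; nra).
  destruct (lpath_scaled R0 lam (2 * d) y1 y2) as [p Hp].
  - unfold lam; lra.
  - exact Hy1.
  - unfold outside_ball; fold r2; lra.
  - now apply near_chord_outside.
  - fold r1; unfold lam; lra.
  - fold d; unfold lam; nra.
  - fold r2; unfold lam; replace ((1 + d / r1 - 1) * r2) with (d * (r2 / r1)) by (field; lra).
    assert (r2 / r1 <= 2) by (apply Rmult_le_reg_r with r1; [lra|]; unfold Rdiv;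
      rewrite Rmult_assoc, Rinv_l, Rmult_1_r by lra; lra).
    nra.
  - exists p; apply lpath_weaken with (4 * (2 * d)); auto; lra.
Qed.

Lemma exterior_lpath_acute : norm y1 < dist y1 y2 -> 0 <= dot y1 y2 ->
  exists p, lpath (outside_ball R0) (32 * dist y1 y2) y1 y2 p.
Proof.
  intros Hd Hdot.
  assert (Hr2 : norm y2 <= norm y1 + dist y1 y2) by apply norm_le_dist.
  pose proof (outside_ball_dot R0 y1 ltac:(lra) Hy1).
  pose proof (outside_ball_dot R0 y2 ltac:(lra) ltac:(unfold outside_ball; lra)).
  assert (Hmid : forall t, 0 <= t <= 1 -> outside_ball R0 (seg (vscal 2 y1) (vscal 2 y2) t)).
  { intros t Ht; apply seg_outside_acute; auto; rewrite ?dot_scal_l, ?dot_scal_r; nra. }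
  destruct (lpath_scaled R0 2 (2 * dist y1 y2) y1 y2) as [p Hp]; auto; try lra.
  - unfold outside_ball; lra.
  - exists p; apply lpath_weaken with (4 * (2 * dist y1 y2)); auto.
    pose proof (dist_nonneg y1 y2); lra.
Qed.

Lemma exterior_lpath_perp w : norm y1 < dist y1 y2 ->
  dot w y1 = 0 -> 0 <= dot w y2 -> 2 * dot y1 y1 <= dot w w <= 4 * dot y1 y1 ->
  exists p, lpath (outside_ball R0) (32 * dist y1 y2) y1 y2 p.
Proof.
  intros Hd Hw1 Hw2 Hww.
  assert (Hr2 : norm y2 <= norm y1 + dist y1 y2) by apply norm_le_dist.
  pose proof (outside_ball_dot R0 y1 ltac:(lra) Hy1).
  pose proof (outside_ball_dot R0 y2 ltac:(lra) ltac:(unfold outside_ball; lra)).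
  assert (Hnw : norm w <= 2 * norm y1).
  { rewrite <- !norm_sq in Hww; pose proof (norm_nonneg w); pose proof (norm_nonneg y1); nra. }
  assert (Hd0 : 0 <= dist y1 y2) by apply dist_nonneg.
  exists (conc (conc (seg y1 (vscal 2 y1)) (seg (vscal 2 y1) w))
               (conc (seg w (vscal 2 y2)) (rev (seg y2 (vscal 2 y2))))).
  apply lpath_weaken with (2 * (2 * (6 * dist y1 y2))); [|lra].
  apply lpath_conc with w;
    [apply lpath_conc with (vscal 2 y1) | apply lpath_conc with (vscal 2 y2)].
  - apply lpath_weaken with ((2 - 1) * norm y1); [apply lpath_radial|]; auto; lra.
  - apply lpath_weaken with (dist (vscal 2 y1) w).
    + apply lpath_seg; intros t Ht; apply seg_outside_acute; auto;
        rewrite ?dot_scal_l, ?dot_scal_r, ?(dot_sym y1 w); nra.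
    + eapply Rle_trans; [apply dist_le_norm|]; rewrite norm_scal, Rabs_right; lra.
  - apply lpath_weaken with (dist w (vscal 2 y2)).
    + apply lpath_seg; intros t Ht; apply seg_outside_acute; auto;
        rewrite ?dot_scal_l, ?dot_scal_r; nra.
    + eapply Rle_trans; [apply dist_le_norm|]; rewrite norm_scal, Rabs_right; lra.
  - apply lpath_weaken with ((2 - 1) * norm y2); [apply lpath_rev, lpath_radial|];
      unfold outside_ball; lra.
Qed.

Lemma exterior_lpath_ordered : 0 <= dot y1 y2 \/ has_perp ->
  exists p, lpath (outside_ball R0) (32 * dist y1 y2) y1 y2 p.
Proof.
  intro Hc.
  destruct (Rle_or_lt (dist y1 y2) (norm y1)) as [Hnear|Hfar]; [now apply exterior_lpath_near|].
  destruct (Rle_or_lt 0 (dot y1 y2)) as [Hacute|Hobtuse]; [now apply exterior_lpath_acute|].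
  destruct Hc as [Hc|Hperp]; [lra|].
  destruct (Hperp y1) as (w & Hw1 & Hww).
  destruct (Rle_or_lt 0 (dot w y2)) as [Hw2|Hw2].
  - now apply exterior_lpath_perp with w.
  - apply exterior_lpath_perp with (vscal (-1) w); auto;
      rewrite ?dot_scal_l, ?dot_scal_r, ?Hw1; lra.
Qed.

End Ordered.

Lemma exterior_lpath R0 y1 y2 : 0 < R0 -> outside_ball R0 y1 -> outside_ball R0 y2 ->
  0 <= dot y1 y2 \/ has_perp -> exists p, lpath (outside_ball R0) (32 * dist y1 y2) y1 y2 p.
Proof.
  intros HR0 Hy1 Hy2 Hc.
  destruct (Rle_or_lt (norm y1) (norm y2)) as [H12|H21].
  - now apply exterior_lpath_ordered.
  - destruct (exterior_lpath_ordered R0 y2 y1) as [p Hp]; auto; [lra | now rewrite dot_sym|].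
    exists (rev p); rewrite dist_sym; now apply lpath_rev.
Qed.

End Exterior.

Section Plane.
Variable m : nat.

Definition e0 : point (S (S m)) := fun i => match i with Fin.F1 => 1 | Fin.FS _ => 0 end.
Definition e1 : point (S (S m)) :=
  fun i => match i with Fin.F1 => 0 | Fin.FS j => match j with Fin.F1 => 1 | Fin.FS _ => 0 end end.

Lemma dot_e0 (a : point (S (S m))) : dot e0 a = a Fin.F1.
Proof. unfold dot; simpl; rewrite sumFin_zero; ring. Qed.

Lemma dot_e1 (a : point (S (S m))) : dot e1 a = a (Fin.FS Fin.F1).
Proof. unfold dot; simpl; rewrite sumFin_zero; ring. Qed.

Lemma dot_self_ge_two_coords (a : point (S (S m))) :
  a Fin.F1 ^ 2 + a (Fin.FS Fin.F1) ^ 2 <= dot a a.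
Proof.
  unfold dot; simpl.
  pose proof (sumFin_nonneg m (fun i => a (Fin.FS (Fin.FS i)) * a (Fin.FS (Fin.FS i))))
    as Hrest; pose proof (Hrest ltac:(intros; nra)).
  lra.
Qed.

(* Take a unit vector e among the first two basis vectors with (e.a)^2 <= |a|^2/2;
   then u = |a|^2 e - (e.a) a is orthogonal to a, and (2/|a|) u has the right size. *)
Lemma has_perp_SS : @has_perp (S (S m)).
Proof.
  intro a; set (N := dot a a); assert (HN : 0 <= N) by apply dot_self_nonneg.
  destruct (Req_dec N 0) as [Z|NZ].
  { exists vzero; rewrite !dot_zero_l; fold N; lra. }
  assert (Hex : exists e : point (S (S m)), dot e e = 1 /\ dot e a ^ 2 <= N / 2).
  { pose proof (dot_self_ge_two_coords a) as Ha; fold N in Ha.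
    destruct (Rle_or_lt (a Fin.F1 ^ 2) (N / 2)).
    - exists e0; rewrite !dot_e0; split; [reflexivity | auto].
    - exists e1; rewrite !dot_e1; split; [reflexivity | lra]. }
  destruct Hex as (e & He1 & He2); set (c := dot e a) in *.
  set (u := vsub (vscal N e) (vscal c a)).
  assert (Hua : dot u a = 0) by (unfold u; rewrite dot_sub_l, !dot_scal_l; fold c N; ring).
  assert (Huu : dot u u = N ^ 2 - c ^ 2 * N)
    by (unfold u; rewrite dot_sub_l, !dot_sub_r, !dot_scal_l, !dot_scal_r, He1, (dot_sym a e);
        fold c N; ring).
  assert (Hs : 0 < sqrt N) by (apply sqrt_lt_R0; lra).
  assert (Hss : sqrt N * sqrt N = N) by (apply sqrt_sqrt; lra).
  exists (vscal (2 / sqrt N) u).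
  rewrite dot_scal_l, Hua, dot_scal_l, dot_scal_r, Huu.
  replace (2 / sqrt N * (2 / sqrt N * (N ^ 2 - c ^ 2 * N))) with (4 * N - 4 * c ^ 2).
  - fold N; pose proof (pow2_ge_0 c); nra.
  - set (r := sqrt N) in *; clearbody N r; rewrite <- Hss; field; lra.
Qed.

End Plane.

(* The cases k = 0, k = 1 (any two vectors are proportional) and k >= 2. *)
Lemma dimension_cases (k : nat) : (forall a : point k, norm a = 0) \/
  (forall a b c : point k, dot a b * dot c c = dot a c * dot b c) \/ @has_perp k.
Proof.
  destruct k as [|[|m]].
  - left; intro a; unfold norm, dist; simpl; apply sqrt_0.
  - right; left; intros; unfold dot; simpl; ring.
  - right; right; apply has_perp_SS.
Qed.

Lemma bounded_in_ball {n : nat} (A : RnSet n) :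
  is_bounded A -> exists M, 0 < M /\ forall x, A x -> norm x < M.
Proof.
  intros [M HM]; destruct (classic (exists x0, A x0)) as [[x0 Hx0]|Hempty].
  - pose proof (norm_nonneg x0); pose proof (Rabs_pos M); pose proof (Rle_abs M).
    exists (norm x0 + Rabs M + 1); split; [lra|].
    intros x Ax; pose proof (norm_le_dist x0 x); pose proof (HM x0 x Hx0 Ax); lra.
  - exists 1; split; [lra|]; intros x Ax; exfalso; eauto.
Qed.

Lemma bounded_of_norm_le {n : nat} (A : RnSet n) (M : R) :
  (forall x, A x -> norm x <= M) -> is_bounded A.
Proof.
  intro HM; exists (2 * M); intros x y Ax Ay.
  pose proof (dist_le_norm x y); pose proof (HM x Ax); pose proof (HM y Ay); lra.
Qed.

Lemma is_open_near_image {k n : nat} (h : point k -> point n) (P : RnSet k) (delta : R) :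
  is_open (fun x => exists y, P y /\ dist x (h y) < delta).
Proof.
  intros x [y [Py Hxy]]; exists (delta - dist x (h y)); split; [lra|].
  intros z Hz; exists y; split; auto.
  pose proof (dist_triangle z x (h y)); rewrite (dist_sym z x) in *; lra.
Qed.

Lemma opposite_sides_far {k : nat} (R0 : R) (y y' c : point k) :
  (forall a b e : point k, dot a b * dot e e = dot a e * dot b e) -> 0 <= R0 ->
  outside_ball R0 y -> outside_ball R0 y' -> 0 < dot y c -> dot y' c < 0 -> R0 < dist y y'.
Proof.
  intros Hline HR Hy Hy' Hc Hc'.
  pose proof (Hline y y' c) as E; pose proof (dot_self_nonneg c).
  assert (Hyy : dot y y' < 0) by nra.
  pose proof (outside_ball_dot R0 y HR Hy); pose proof (outside_ball_dot R0 y' HR Hy').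
  pose proof (dist_sq y y'); pose proof (dist_nonneg y y'); nra.
Qed.

Section BiLipschitz.
Context {n k : nat}.
Variables (X : RnSet n) (K1 : RnSet k) (K2 : RnSet n).
Variables (f : point k -> point n) (g : point n -> point k) (lam R0 : R).
Hypotheses (Hlam : 0 < lam) (HR0 : 0 < R0) (HK1 : forall y, K1 y -> norm y < R0).
Hypotheses (Hf_maps : forall y, ~ K1 y -> setminus X K2 (f y))
  (Hg_maps : forall x, setminus X K2 x -> ~ K1 (g x))
  (Hgf : forall y, ~ K1 y -> g (f y) = y) (Hfg : forall x, setminus X K2 x -> f (g x) = x)
  (Hf_lip : lipschitz_on lam (fun y => ~ K1 y) f) (Hg_lip : lipschitz_on lam (setminus X K2) g).

(* The intersection of [X] with [K2] union [f] of the closed ball of radius [R0],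
   described through the inverse [g]. *)
Definition core : RnSet n := fun x => X x /\ (K2 x \/ norm (g x) <= R0).

Lemma outside_ball_not_K1 y : outside_ball R0 y -> ~ K1 y.
Proof. intros Hy Ky; pose proof (HK1 y Ky); unfold outside_ball in Hy; lra. Qed.

Lemma setminus_core x : setminus X core x -> setminus X K2 x /\ outside_ball R0 (g x).
Proof.
  intros [Xx Hx]; split; [split; auto; intro; apply Hx; split; [auto | now left]|].
  apply Rnot_le_lt; intro; apply Hx; split; [auto | now right].
Qed.

Lemma outside_ball_setminus_core y : outside_ball R0 y -> setminus X core (f y).
Proof.
  intro Hy; pose proof (outside_ball_not_K1 y Hy) as Ny.
  destruct (Hf_maps y Ny) as [Xf NK2]; split; auto.
  intros [_ [K2f|Hle]]; auto; rewrite (Hgf y Ny) in Hle; unfold outside_ball in Hy; lra.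
Qed.

Lemma core_closed : is_closed X -> is_closed K2 -> is_closed core.
Proof.
  intros HX HK2 x Nx.
  destruct (classic (X x)) as [Xx|NXx].
  - destruct (setminus_core x (conj Xx Nx)) as [[_ NK2x] Hgx]; unfold outside_ball in Hgx.
    destruct (HK2 x NK2x) as [e [He Hball]].
    set (r := (norm (g x) - R0) / lam).
    exists (Rmin e r); split; [apply Rmin_glb_lt; [|apply Rdiv_lt_0_compat]; lra|].
    intros z Hz [Xz Cz]; pose proof (Rmin_l e r); pose proof (Rmin_r e r).
    assert (NK2z : ~ K2 z) by (apply Hball; lra).
    destruct Cz as [K2z|Hz']; [contradiction|].
    pose proof (Hg_lip x z (conj Xx NK2x) (conj Xz NK2z)).
    pose proof (norm_le_dist (g z) (g x)); rewrite (dist_sym (g z)) in *.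
    assert (lam * dist x z < norm (g x) - R0); [|lra].
    apply Rmult_lt_reg_l with (/ lam); [apply Rinv_0_lt_compat; lra|].
    rewrite <- Rmult_assoc, Rinv_l, Rmult_1_l by lra; unfold r, Rdiv in *; lra.
  - destruct (HX x NXx) as [e [He Hball]]; exists e; split; auto.
    intros z Hz [Xz _]; exact (Hball z Hz Xz).
Qed.

Lemma core_bounded : is_bounded K2 -> is_bounded core.
Proof.
  intros HK2; destruct (bounded_in_ball K2 HK2) as [M2 [HM2 HK2M]].
  assert (Hbase : is_bounded (fun x => setminus X K2 x /\ norm (g x) <= R0)).
  { exists (2 * lam * R0); intros x y [Bx Nx] [By Ny].
    rewrite <- (Hfg x Bx), <- (Hfg y By).
    eapply Rle_trans; [apply Hf_lip; auto|].
    pose proof (dist_le_norm (g x) (g y)); nra. }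
  destruct (bounded_in_ball _ Hbase) as [M [HM HMb]].
  apply bounded_of_norm_le with (Rmax M2 M); intros x [Xx [K2x|Hx]].
  - pose proof (HK2M x K2x); pose proof (Rmax_l M2 M); lra.
  - destruct (classic (K2 x)) as [K2x|NK2x];
      [pose proof (HK2M x K2x) | pose proof (HMb x (conj (conj Xx NK2x) Hx))];
      pose proof (Rmax_l M2 M); pose proof (Rmax_r M2 M); lra.
Qed.

Lemma lpath_image (L : R) y1 y2 p : lpath (outside_ball R0) L y1 y2 p ->
  lpath (setminus X core) (lam * L) (f y1) (f y2) (fun t => f (p t)).
Proof.
  intros (E0 & E1 & [HL Hp] & Hout).
  split; [now rewrite E0|]; split; [now rewrite E1|]; split; [split|].
  - nra.
  - intros s t Hs Ht; eapply Rle_trans; [apply Hf_lip; apply outside_ball_not_K1; auto|].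
    rewrite Rmult_assoc; apply Rmult_le_compat_l; [lra | auto].
  - intros t Ht; now apply outside_ball_setminus_core, Hout.
Qed.

(* On a line the two half-lines outside the ball are 2 R0 apart, so their images
   under [f] are [R0 / lam] apart and separate every component. *)
Lemma component_same_side C x1 x2 :
  (forall a b e : point k, dot a b * dot e e = dot a e * dot b e) ->
  connected_component (setminus X core) C -> C x1 -> C x2 -> 0 <= dot (g x1) (g x2).
Proof.
  intros Hline (_ & HCS & HCc & _) C1 C2; set (c := g x1).
  apply Rnot_lt_le; intro Hneg.
  set (delta := R0 / (2 * lam)).
  assert (Hdelta : lam * (2 * delta) = R0) by (unfold delta; field; lra).
  set (side := fun s : R -> Prop => fun x : point n =>
         exists y, (outside_ball R0 y /\ s (dot y c)) /\ dist x (f y) < delta).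
  assert (Hside : forall s x, C x -> s (dot (g x) c) -> side s x).
  { intros s x Cx Hs; destruct (setminus_core x (HCS x Cx)) as [Bx Ox].
    exists (g x); split; [auto|]; rewrite (Hfg x Bx), dist_self; unfold delta.
    apply Rdiv_lt_0_compat; lra. }
  apply HCc; exists (side (fun r => 0 < r)), (side (fun r => r < 0)).
  split; [apply is_open_near_image|]; split; [apply is_open_near_image|].
  split; [|split; [|split]].
  - intros x Cx; destruct (setminus_core x (HCS x Cx)) as [_ Ox].
    assert (Hc : outside_ball R0 c) by (exact (proj2 (setminus_core x1 (HCS x1 C1)))).
    assert (dot (g x) c <> 0).
    { intro E; pose proof (Hline (g x) (g x) c) as Hl; rewrite E in Hl.
      pose proof (outside_ball_dot R0 _ ltac:(lra) Ox).
      pose proof (outside_ball_dot R0 _ ltac:(lra) Hc).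
      assert (0 < dot (g x) (g x) * dot c c) by (apply Rmult_lt_0_compat; nra).
      lra. }
    destruct (Rle_or_lt 0 (dot (g x) c)); [left | right]; apply Hside; auto; lra.
  - exists x1; split; auto; apply Hside; auto.
    pose proof (outside_ball_dot R0 c ltac:(lra) (proj2 (setminus_core x1 (HCS x1 C1)))).
    fold c; nra.
  - exists x2; split; auto; apply Hside; auto; now rewrite dot_sym.
  - intros x _ [y [[Oy Py] Dy]] [y' [[Oy' Py'] Dy']].
    assert (Hfar : R0 < dist y y') by (apply (opposite_sides_far R0 y y' c); auto; lra).
    pose proof (outside_ball_not_K1 y Oy) as Ny; pose proof (outside_ball_not_K1 y' Oy') as Ny'.
    pose proof (Hg_lip (f y) (f y') (Hf_maps y Ny) (Hf_maps y' Ny')) as Hgg.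
    rewrite (Hgf y Ny), (Hgf y' Ny') in Hgg.
    pose proof (dist_triangle (f y) x (f y')); rewrite (dist_sym (f y) x) in *.
    assert (lam * dist (f y) (f y') < lam * (2 * delta)) by (apply Rmult_lt_compat_l; lra).
    lra.
Qed.

Lemma component_LNE C : connected_component (setminus X core) C -> LNE C.
Proof.
  intros HC; exists (32 * lam * lam); split; [nra|].
  intros x1 x2 C1 C2 eps Heps.
  destruct HC as (Hne & HCS & HCc & Hmax).
  destruct (setminus_core x1 (HCS x1 C1)) as [B1 O1].
  destruct (setminus_core x2 (HCS x2 C2)) as [B2 O2].
  assert (Hside : 0 <= dot (g x1) (g x2) \/ @has_perp k).
  { destruct (dimension_cases k) as [Hzero|[Hline|Hperp]]; auto.
    - exfalso; unfold outside_ball in O1; rewrite Hzero in O1; lra.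
    - left; now apply (component_same_side C). }
  destruct (exterior_lpath R0 (g x1) (g x2) HR0 O1 O2 Hside) as [p Hp].
  pose proof (lpath_image _ _ _ _ Hp) as Hfp; rewrite (Hfg x1 B1), (Hfg x2 B2) in Hfp.
  destruct (component_lpath _ C _ _ _ _ (conj Hne (conj HCS (conj HCc Hmax))) C1 Hfp) as [Hin Hlen].
  exists (fun t => f (p t)); split; auto.
  intros m t Ht Hmono; specialize (Hlen m t Ht Hmono).
  pose proof (Hg_lip x1 x2 B1 B2); nra.
Qed.

End BiLipschitz.

Theorem mainTheorem2 (n : nat) (X : RnSet n) :
  is_closed X -> ~ is_bounded X -> lipschitz_regular_at_infinity X ->
  exists K : RnSet n, is_compact K /\
    forall C : RnSet n, connected_component (setminus X K) C -> LNE C.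
Proof.
  intros HX _ (k & K1 & K2 & f & [_ HK1] & [HK2c HK2b] & g & lam
              & Hlam & Hf & Hg & Hgf & Hfg & Hflip & Hglip).
  destruct (bounded_in_ball K1 HK1) as [R0 [HR0 HK1R]].
  exists (core X K2 g R0); split; [split|].
  - now apply (core_closed X K2 g lam R0).
  - now apply (core_bounded X K1 K2 f g lam R0).
  - intros C HC; now apply (component_LNE X K1 K2 f g lam R0).
Qed.
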